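(* Let $G$ be a finitely generated group and $\phi\in\mathrm{Aut}(G)$. Then: (i) if $GCP_{Rat}(G\rtimes_\phi\mathbb{Z})$ is decidable, then $GBrCP_{(Rat,\phi)}(G)$ and $GTCP_{(Rat,\phi)}(G)$ are decidable; (ii) if $GCP_{Rat}(G\rtimes\mathbb{Z})$ is decidable, then $GBrCP_{Rat}(G)$ and $GTCP_{Rat}(G)$ are decidable; (iii) if $GCP_{Alg}(G\rtimes_\phi\mathbb{Z})$ is decidable, then $GBrCP_{(Alg,\phi)}(G)$ and $GTCP_{(Alg,\phi)}(G)$ are decidable; (iv) if $GCP_{Alg}(G\rtimes\mathbb{Z})$ is decidable, then $GBrCP_{Alg}(G)$ and $GTCP_{Alg}(G)$ are decidable.
   Context: $G\rtimes_\psi\mathbb{Z}$ is generated by $G$ and $t$ with $t^{-1}at=\psi(a)$. For a finitely generated group $X$ with finite generating set $A$ and canonical surjection $\pi:\tilde A^*\to X$ from the free monoid on $A\cup A^{-1}$, a subset $K\subseteq X$ is rational ($Rat$) if $K=L\pi$ for a rational language $L$, and algebraic ($Alg$) if $K=L\pi$ for a context-free language $L$ (given by automaton/grammar). For $\mathcal C\in\{Rat,Alg\}$: $GCP_{\mathcal C}(X)$: given $K\in\mathcal C(X)$ and $x\in X$, decide whether some conjugate of $x$ lies in $K$; $GCP_{\mathcal C}(G\rtimes\mathbb{Z})$ is the uniform version with the defining automorphism also part of the input. $GBrCP_{\mathcal C}(G)$: given $K\in\mathcal C(G)$, $\psi\in\mathrm{Aut}(G)$, $x\in G$, decide whether some $\psi^k(x)$,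 $k\in\mathbb{Z}$, is conjugate to an element of $K$. $GTCP_{\mathcal C}(G)$: given $K$, $\psi$, $x$, decide whether there is $z\in G$ with $\psi(z)^{-1}xz\in K$. The subscript $(\mathcal C,\phi)$ means the automorphism is fixed to be $\phi$. *)

From mathcomp Require Import all_boot all_algebra.
Set Implicit Arguments. Unset Strict Implicit. Unset Printing Implicit Defensive.
Import GRing.Theory.

(* Decidability is expressed through this explicit program syntax,    *)
(* NOT through Rocq functions (which, with the classical axioms that  *)
(* are allowed, would make every predicate "decidable").              *)
Inductive recf : Type :=
| RZero : recf
| RSucc : recf
| RProj : nat -> recf
| RComp : recf -> list recf -> recf
| RPrim : recf -> recf -> recf
| RMu   : recf -> recf.

Inductive reval : recf -> seq nat -> nat -> Prop :=
| ev_zero v : reval RZero v 0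
| ev_succ x v : reval RSucc (x :: v) x.+1
| ev_proj i v : i < size v -> reval (RProj i) v (nth 0 v i)
| ev_comp f gs v ys y : revals gs v ys -> reval f ys y -> reval (RComp f gs) v y
| ev_prim0 f g v y : reval f v y -> reval (RPrim f g) (0 :: v) y
| ev_primS f g n v r y :
    reval (RPrim f g) (n :: v) r -> reval g (n :: r :: v) y ->
    reval (RPrim f g) (n.+1 :: v) y
| ev_mu f v n :
    reval f (n :: v) 0 ->
    (forall m, m < n -> exists k, reval f (m :: v) k.+1) ->
    reval (RMu f) v n
with revals : seq recf -> seq nat -> seq nat -> Prop :=
| evs_nil v : revals [::] v [::]
| evs_cons g gs v y ys : reval g v y -> revals gs v ys -> revals (g :: gs) v (y :: ys).

(* A (promise) problem on a countable input type X, inputs encoded in nat by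
   the canonical (computable) [pickle] encoding: it is decidable if some
   partial recursive function outputs 1 on yes-instances and 0 on
   no-instances among the inputs satisfying the promise [Dom]. *)
Definition decidable_on (X : countType) (Dom P : X -> Prop) : Prop :=
  exists f : recf, forall x : X, Dom x ->
    (P x -> reval f [:: pickle x] 1) /\ (~ P x -> reval f [:: pickle x] 0).

(* NFA: (initial state, transitions (p, a, q), final states). *)
Notation nfa L := (nat * seq (nat * L * nat) * seq nat)%type.

Inductive nfa_run (L : eqType) (tr : seq (nat * L * nat)) (fin : seq nat)
  : nat -> seq L -> Prop :=
| run_nil q : q \in fin -> nfa_run tr fin q [::]
| run_cons q a q' w : (q, a, q') \in tr -> nfa_run tr fin q' w ->
                      nfa_run tr fin q (a :: w).

Definition nfa_lang (L : eqType) (M : nfa L) (w : seq L) : Prop :=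
  nfa_run M.1.2 M.2 M.1.1 w.

(* Context-free grammar: (start nonterminal, productions A -> rhs),
   nonterminals are nats, terminals are letters (inr). *)
Notation cfg L := (nat * seq (nat * seq (nat + L)))%type.

Inductive cfg_der (L : eqType) (P : seq (nat * seq (nat + L)))
  : nat -> seq L -> Prop :=
| der_prod A rhs w : (A, rhs) \in P -> cfg_ders P rhs w -> cfg_der P A w
with cfg_ders (L : eqType) (P : seq (nat * seq (nat + L)))
  : seq (nat + L) -> seq L -> Prop :=
| ders_nil : cfg_ders P [::] [::]
| ders_term a rest w : cfg_ders P rest w -> cfg_ders P (inr a :: rest) (a :: w)
| ders_nt A rest u w : cfg_der P A u -> cfg_ders P rest w ->
                       cfg_ders P (inl A :: rest) (u ++ w).

Definition cfg_lang (L : eqType) (Gr : cfg L) (w : seq L) : Prop :=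
  cfg_der Gr.2 Gr.1 w.

Definition is_group (G : Type) (mul : G -> G -> G) (one : G) (inv : G -> G) :=
  [/\ forall x y z, mul x (mul y z) = mul (mul x y) z,
      forall x, mul one x = x, forall x, mul x one = x,
      forall x, mul (inv x) x = one & forall x, mul x (inv x) = one].

Definition weval (X L : Type) (mul : X -> X -> X) (one : X) (ev : L -> X)
  (w : seq L) : X := foldr (fun a acc => mul (ev a) acc) one w.

Definition in_subset (X L D : Type) (mul : X -> X -> X) (one : X) (ev : L -> X)
  (lang : D -> seq L -> Prop) (d : D) (x : X) : Prop :=
  exists w, lang d w /\ weval mul one ev w = x.

Definition letG (G : Type) (inv : G -> G) (n : nat) (gens : 'I_n -> G)
  (a : 'I_n * bool) : G := if a.2 then inv (gens a.1) else gens a.1.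

Definition wordG (G : Type) (mul : G -> G -> G) (one : G) (inv : G -> G)
  (n : nat) (gens : 'I_n -> G) (w : seq ('I_n * bool)) : G :=
  weval mul one (letG inv gens) w.

Definition is_aut (G : Type) (mul : G -> G -> G) (psi psiinv : G -> G) :=
  [/\ forall x y, psi (mul x y) = mul (psi x) (psi y),
      cancel psi psiinv & cancel psiinv psi].

Definition autpow (G : Type) (psi psiinv : G -> G) (k : int) : G -> G :=
  match k with
  | Posz m => iter m psi
  | Negz m => iter m.+1 psiinv
  end.

(* Semidirect product G x|_psi Z: the pair (k, g) stands for t^k g,    *)
(* with t^-1 a t = psi(a), hence t^k g t^l h = t^(k+l) psi^l(g) h.      *)
Section SD.
Variables (G : Type) (mul : G -> G -> G) (one : G) (inv : G -> G).
Variables (psi psiinv : G -> G).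

Definition sd_mul (x y : int * G) : int * G :=
  (x.1 + y.1, mul (autpow psi psiinv y.1 x.2) y.2)%R.
Definition sd_one : int * G := (0%R, one).
Definition sd_inv (x : int * G) : int * G :=
  ((- x.1)%R, autpow psi psiinv (- x.1)%R (inv x.2)).

Definition sd_let (n : nat) (gens : 'I_n -> G) (a : option 'I_n * bool)
  : int * G :=
  match a.1 with
  | Some i => (0%R, letG inv gens (i, a.2))
  | None => (if a.2 then (-1)%R else 1%R, one)
  end.
End SD.

Definition gcp_prop (X L D : Type) (mul : X -> X -> X) (one : X) (inv : X -> X)
  (ev : L -> X) (lang : D -> seq L -> Prop) (inp : D * seq L) : Prop :=
  exists y : X, in_subset mul one ev lang inp.1
                  (mul (inv y) (mul (weval mul one ev inp.2) y)).

Definition represents_aut (G : Type) (mul : G -> G -> G) (one : G)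
  (inv : G -> G) (n : nat) (gens : 'I_n -> G)
  (psiw : {ffun 'I_n -> seq ('I_n * bool)}) (psi psiinv : G -> G) :=
  is_aut mul psi psiinv /\
  forall i, psi (gens i) = wordG mul one inv gens (psiw i).

Definition valid_aut (G : Type) (mul : G -> G -> G) (one : G)
  (inv : G -> G) (n : nat) (gens : 'I_n -> G)
  (psiw : {ffun 'I_n -> seq ('I_n * bool)}) :=
  exists psi psiinv, represents_aut mul one inv gens psiw psi psiinv.

Definition brcp_prop (G D : Type) (mul : G -> G -> G) (one : G) (inv : G -> G)
  (n : nat) (gens : 'I_n -> G) (lang : D -> seq ('I_n * bool) -> Prop)
  (psi psiinv : G -> G) (inp : D * seq ('I_n * bool)) : Prop :=
  exists (k : int) (z : G),
    in_subset mul one (letG inv gens) lang inp.1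
      (mul (inv z) (mul (autpow psi psiinv k (wordG mul one inv gens inp.2)) z)).

Definition tcp_prop (G D : Type) (mul : G -> G -> G) (one : G) (inv : G -> G)
  (n : nat) (gens : 'I_n -> G) (lang : D -> seq ('I_n * bool) -> Prop)
  (psi : G -> G) (inp : D * seq ('I_n * bool)) : Prop :=
  exists z : G,
    in_subset mul one (letG inv gens) lang inp.1
      (mul (inv (psi z)) (mul (wordG mul one inv gens inp.2) z)).

Definition sd_gcp_prop (G D : Type) (mul : G -> G -> G) (one : G)
  (inv : G -> G) (n : nat) (gens : 'I_n -> G)
  (lang : D -> seq (option 'I_n * bool) -> Prop) (psi psiinv : G -> G)
  (inp : D * seq (option 'I_n * bool)) : Prop :=
  gcp_prop (sd_mul mul psi psiinv) (sd_one one) (sd_inv inv psi psiinv)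
           (sd_let one inv gens) lang inp.

Definition ttrue (X : Type) (_ : X) : Prop := True.

Definition cor_3_10_for (G : Type) (mul : G -> G -> G) (one : G)
  (inv : G -> G) (n : nat) (gens : 'I_n -> G) (phi phiinv : G -> G)
  (DG DS : countType)
  (langG : DG -> seq ('I_n * bool) -> Prop)
  (langS : DS -> seq (option 'I_n * bool) -> Prop) : Prop :=
  (* fixed automorphism phi *)
  (decidable_on (@ttrue (DS * seq (option 'I_n * bool)))
     (sd_gcp_prop mul one inv gens langS phi phiinv) ->
   decidable_on (@ttrue (DG * seq ('I_n * bool)))
     (brcp_prop mul one inv gens langG phi phiinv) /\
   decidable_on (@ttrue (DG * seq ('I_n * bool)))
     (tcp_prop mul one inv gens langG phi))
  /\
  (* uniform versions: the automorphism is part of the input *)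
  (decidable_on
     (fun inp : {ffun 'I_n -> seq ('I_n * bool)} * (DS * seq (option 'I_n * bool))
        => valid_aut mul one inv gens inp.1)
     (fun inp => exists psi psiinv,
        represents_aut mul one inv gens inp.1 psi psiinv /\
        sd_gcp_prop mul one inv gens langS psi psiinv inp.2) ->
   decidable_on
     (fun inp : {ffun 'I_n -> seq ('I_n * bool)} * (DG * seq ('I_n * bool))
        => valid_aut mul one inv gens inp.1)
     (fun inp => exists psi psiinv,
        represents_aut mul one inv gens inp.1 psi psiinv /\
        brcp_prop mul one inv gens langG psi psiinv inp.2) /\
   decidable_on
     (fun inp : {ffun 'I_n -> seq ('I_n * bool)} * (DG * seq ('I_n * bool))
        => valid_aut mul one inv gens inp.1)
     (fun inp => exists psi psiinv,
        represents_aut mul one inv gens inp.1 psi psiinv /\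
        tcp_prop mul one inv gens langG psi inp.2)).

(* Write the elements of G x|_psi Z as t^k g. Conjugating x in G by t^k g gives
   g^-1 psi^k(x) g, so (K, x) is a yes-instance of GBrCP iff some conjugate of x in
   G x|_psi Z lies in K. Conjugating t x by t^k g gives t psi(g)^-1 psi^k(x) g, and
   psi^k(x) = psi(u)^-1 x u for some u, so (K, x) is a yes-instance of GTCP iff some
   conjugate of t x lies in t K. An automaton (grammar) for K over the generators of
   G x| Z is obtained by renaming letters, and one for t K by adding a fresh initial
   state (start symbol) that reads t; the code [pickle] of the description is such a
   fresh name. These translations are list manipulations on codes of sequences,
   hence partial recursive, so a decision procedure for GCP in G x| Z yields ones for
   GBrCP and GTCP in G, for a fixed psi as well as uniformly in psi. *)

From mathcomp Require Import all_boot all_algebra.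
From mathcomp Require Import zify.
Set Implicit Arguments. Unset Strict Implicit. Unset Printing Implicit Defensive.

(** * Partial recursive functions on codes of sequences *)

Record computes (k : nat) (f : recf) (F : seq nat -> nat) : Prop :=
  Computes { computesP : forall v, size v = k -> reval f v (F v) }.
Record computes_all (k : nat) (fs : seq recf) (Fs : seq (seq nat -> nat)) : Prop :=
  ComputesAll { computes_allP : forall v, size v = k -> revals fs v [seq F v | F <- Fs] }.

Local Notation a0 v := (nth 0 v 0).
Local Notation a1 v := (nth 0 v 1).

Section Closure.
Variable k : nat.

Lemma computes_ext f F F' : computes k f F ->
  (forall v, size v = k -> F v = F' v) -> computes k f F'.
Proof. by case=> Hf E; constructor=> v sv; rewrite -E //; apply: Hf. Qed.

Lemma computes_zero : computes k RZero (fun=> 0).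
Proof. by constructor=> v _; constructor. Qed.

Lemma computes_proj i : i < k -> computes k (RProj i) (fun v => nth 0 v i).
Proof. by move=> ik; constructor=> v sv; constructor; rewrite sv. Qed.

Lemma computes_all_nil : computes_all k [::] [::].
Proof. by constructor=> v _; constructor. Qed.

Lemma computes_all_cons f fs F Fs :
  computes k f F -> computes_all k fs Fs -> computes_all k (f :: fs) (F :: Fs).
Proof. by case=> Hf [Hfs]; constructor=> v sv; constructor; [apply: Hf | apply: Hfs]. Qed.

Lemma computes_comp m f F gs Gs : computes m f F -> computes_all k gs Gs ->
  size Gs = m -> computes k (RComp f gs) (fun v => F [seq G v | G <- Gs]).
Proof.
case=> Hf [Hgs] sG; constructor=> v sv.
by econstructor; [apply: Hgs | apply: Hf; rewrite size_map].
Qed.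

Fixpoint prim_rec (F G : seq nat -> nat) (n : nat) (v : seq nat) : nat :=
  if n is n'.+1 then G (n' :: prim_rec F G n' v :: v) else F v.

Lemma computes_prim f F g G : computes k f F -> computes k.+2 g G ->
  computes k.+1 (RPrim f g) (fun v => prim_rec F G (a0 v) (behead v)).
Proof.
case=> Hf [Hg]; constructor; case=> [|a v] //= [sv].
elim: a => [|a IH] /=; first by constructor; apply: Hf.
by econstructor; [apply: IH | apply: Hg => /=; rewrite sv].
Qed.

Lemma computes_mu f F M : computes k.+1 f F ->
  (forall v, size v = k -> F (M v :: v) = 0 /\ forall m, m < M v -> F (m :: v) != 0) ->
  computes k (RMu f) M.
Proof.
case=> Hf HM; constructor=> v sv; have [FM0 Fm] := HM v sv; constructor.
  by rewrite -FM0; apply: Hf; rewrite /= sv.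
move=> m /Fm; case E: (F (m :: v)) => [|x] // _; exists x; rewrite -E.
by apply: Hf; rewrite /= sv.
Qed.

End Closure.

Lemma computes_succ : computes 1 RSucc (fun v => (a0 v).+1).
Proof. by constructor; case=> [|x [|]] //= _; constructor. Qed.

Definition rcomp1 f g := RComp f [:: g].
Definition rcomp2 f g h := RComp f [:: g; h].

Section Composition.
Variable k : nat.

Lemma computes_comp1 f F g G : computes 1 f F -> computes k g G ->
  computes k (rcomp1 f g) (fun v => F [:: G v]).
Proof.
move=> Hf Hg.
exact: computes_comp Hf (computes_all_cons Hg (computes_all_nil k)) (erefl 1).
Qed.

Lemma computes_comp2 f F g G h H : computes 2 f F -> computes k g G -> computes k h H ->
  computes k (rcomp2 f g h) (fun v => F [:: G v; H v]).
Proof.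
move=> Hf Hg Hh.
have Hgh := computes_all_cons Hg (computes_all_cons Hh (computes_all_nil k)).
exact: computes_comp Hf Hgh (erefl 2).
Qed.

Fixpoint rconst c := if c is c'.+1 then rcomp1 RSucc (rconst c') else RZero.

Lemma computes_const c : computes k (rconst c) (fun=> c).
Proof.
by elim: c => [|c IH] /=; [exact: computes_zero | exact: computes_comp1 computes_succ IH].
Qed.

Definition rprojs a j := map RProj (iota a j).

Lemma computes_all_projs a j : a + j <= k ->
  computes_all k (rprojs a j) [seq (fun v => nth 0 v i) | i <- iota a j].
Proof.
elim: j a => [|j IH] a ajk; first exact: computes_all_nil.
apply: computes_all_cons; first by apply: computes_proj; lia.
by apply: IH; lia.
Qed.

End Composition.

Lemma map_projs_drop a j v : a + j = size v ->
  [seq G v | G <- [seq (fun v => nth 0 v i) | i <- iota a j]] = drop a v.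
Proof.
move=> E; rewrite -map_comp map_nth_iota; last by rewrite -E addKn.
by rewrite take_oversize // size_drop -E addKn.
Qed.

Lemma computes_shift j k g G : computes k g G ->
  computes (j + k) (RComp g (rprojs j k)) (fun v => G (drop j v)).
Proof.
move=> Hg; apply: computes_ext.
  by apply: computes_comp Hg (computes_all_projs (leqnn _)) _; rewrite size_map size_iota.
by move=> v sv /=; rewrite map_projs_drop.
Qed.

Lemma computes_cons_shift j k f F e E : computes k.+1 f F -> computes (j + k) e E ->
  computes (j + k) (RComp f (e :: rprojs j k)) (fun v => F (E v :: drop j v)).
Proof.
move=> Hf He; apply: computes_ext.
  apply: computes_comp Hf (computes_all_cons He (computes_all_projs (leqnn _))) _.
  by rewrite /= size_map size_iota.
by move=> v sv /=; rewrite map_projs_drop.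
Qed.

Create HintDb computes.

Ltac computable := repeat first
  [ solve [eauto 1 with computes nocore] | apply: computes_comp1 | apply: computes_comp2
  | apply: computes_const | apply: computes_zero | apply: computes_succ
  | by apply: computes_proj ].

Definition radd := RPrim (RProj 0) (rcomp1 RSucc (RProj 1)).
Lemma computes_add : computes 2 radd (fun v => a0 v + a1 v).
Proof.
apply: computes_ext; first by apply: computes_prim; computable.
by case=> [|a [|b []]] //= _; elim: a => //= a ->.
Qed.
#[local] Hint Resolve computes_add : computes.

Definition rmul := RPrim RZero (rcomp2 radd (RProj 1) (RProj 2)).
Lemma computes_mul : computes 2 rmul (fun v => a0 v * a1 v).
Proof.
apply: computes_ext; first by apply: computes_prim; computable.
by case=> [|a [|b []]] //= _; elim: a => //= a ->; rewrite mulSn addnC.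
Qed.
#[local] Hint Resolve computes_mul : computes.

Definition rpred := RPrim RZero (RProj 0).
Lemma computes_pred : computes 1 rpred (fun v => (a0 v).-1).
Proof.
apply: computes_ext; first by apply: computes_prim; computable.
by case=> [|[|a] []].
Qed.
#[local] Hint Resolve computes_pred : computes.

Definition rsub := rcomp2 (RPrim (RProj 0) (rcomp1 rpred (RProj 1))) (RProj 1) (RProj 0).
Lemma computes_sub : computes 2 rsub (fun v => a0 v - a1 v).
Proof.
apply: computes_ext; first by computable; apply: computes_prim; computable.
case=> [|a [|b []]] //= _; elim: b => [|b IH] /=; first by rewrite subn0.
by rewrite IH subnS.
Qed.
#[local] Hint Resolve computes_sub : computes.

Definition rpow2 := RPrim (rconst 1) (rcomp2 radd (RProj 1) (RProj 1)).
Lemma computes_pow2 : computes 1 rpow2 (fun v => 2 ^ a0 v).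
Proof.
apply: computes_ext; first by apply: computes_prim; computable.
by case=> [|a []] //= _; elim: a => //= a ->; rewrite expnS mul2n addnn.
Qed.
#[local] Hint Resolve computes_pow2 : computes.

(* [m %/ 2 ^ j] is the least [q] with [m < q.+1 * 2 ^ j]. *)
Definition rdiv_pow2 := RMu (rcomp2 rsub (rconst 1)
  (rcomp2 rsub (rcomp2 rmul (rcomp1 RSucc (RProj 0)) (rcomp1 rpow2 (RProj 2))) (RProj 1))).
Lemma computes_div_pow2 : computes 2 rdiv_pow2 (fun v => a0 v %/ 2 ^ a1 v).
Proof.
apply: computes_mu; first by computable.
case=> [|m [|j []]] //= _; set d := 2 ^ j; have d_gt0 : 0 < d by rewrite expn_gt0.
split; first by apply/eqP; rewrite subn_eq0 lt0n subn_eq0 -ltnNge ltn_ceil.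
move=> q lt_q; rewrite subn_eq0 -ltnNge ltnS leqn0 subn_eq0.
by apply: leq_trans (leq_divM m d); rewrite leq_mul2r lt_q orbT.
Qed.
#[local] Hint Resolve computes_div_pow2 : computes.

(* [CodeSeq.code (x :: s) = 2 ^ x * odd], so the head of the sequence coded by
   [m > 0] is the least [j] such that [2 ^ j.+1] does not divide [m]. *)
Definition rhead := RMu (rcomp2 rmul (RProj 1) (rcomp2 rsub (rconst 1)
  (rcomp2 rsub (RProj 1) (rcomp2 rmul (rcomp2 rdiv_pow2 (RProj 1) (rcomp1 RSucc (RProj 0)))
                                    (rcomp1 rpow2 (rcomp1 RSucc (RProj 0))))))).
Lemma computes_head : computes 1 rhead (fun v => head 0 (CodeSeq.decode (a0 v))).
Proof.
have modE m d : m - m %/ d * d = m %% d by rewrite {1}(divn_eq m d) addnC addnK.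
apply: computes_mu; first by computable.
case=> [|m []] //= _; rewrite !modE.
rewrite -(CodeSeq.decodeK m); case: (CodeSeq.decode m) => [|x s]; rewrite CodeSeq.codeK //=.
set c := (CodeSeq.code s).*2.+1; split.
  apply/eqP; rewrite muln_eq0 subn_eq0 lt0n -/(dvdn _ _) expnSr.
  by rewrite dvdn_pmul2l ?expn_gt0 // dvdn2 /c /= odd_double orbT.
move=> j lt_jx; rewrite modE muln_eq0 negb_or muln_eq0 expn_eq0 /=.
suff /eqP -> : (2 ^ x * c) %% 2 ^ j.+1 == 0 by [].
by apply: dvdn_mulr; apply: dvdn_exp2l.
Qed.
#[local] Hint Resolve computes_head : computes.

Definition rbehead := rcomp2 rdiv_pow2 (RProj 0) (rcomp1 RSucc (rcomp1 rhead (RProj 0))).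
Lemma computes_behead :
  computes 1 rbehead (fun v => CodeSeq.code (behead (CodeSeq.decode (a0 v)))).
Proof.
apply: computes_ext; first by computable.
case=> [|m []] //= _; rewrite -{1}(CodeSeq.decodeK m).
case: (CodeSeq.decode m) => [|x s] //=.
rewrite expnSr divnMl ?expn_gt0 // divn2.
by rewrite -[(CodeSeq.code s).*2.+1]/(true + (CodeSeq.code s).*2) half_bit_double.
Qed.
#[local] Hint Resolve computes_behead : computes.

Definition rdrop := RPrim (RProj 0) (rcomp1 rbehead (RProj 1)).
Lemma computes_drop :
  computes 2 rdrop (fun v => CodeSeq.code (drop (a0 v) (CodeSeq.decode (a1 v)))).
Proof.
apply: computes_ext; first by apply: computes_prim; computable.
case=> [|j [|m []]] //= _; elim: j => [|j IH] /=; first by rewrite drop0 CodeSeq.decodeK.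
by rewrite IH CodeSeq.codeK -[drop j.+1 _]/(drop (1 + j) _) -drop_drop drop1.
Qed.
#[local] Hint Resolve computes_drop : computes.

Lemma code_eq0 s : (CodeSeq.code s == 0) = (s == [::]).
Proof. by case: s => //= x s; rewrite muln_eq0 expn_eq0. Qed.

Definition rsize := RMu rdrop.
Lemma computes_size : computes 1 rsize (fun v => size (CodeSeq.decode (a0 v))).
Proof.
apply: computes_mu; first by computable.
case=> [|m []] //= _; rewrite drop_size; split => // j lt_j.
by rewrite code_eq0 -size_eq0 size_drop subn_eq0 -ltnNge.
Qed.
#[local] Hint Resolve computes_size : computes.

Definition rnth := rcomp1 rhead rdrop.
Lemma computes_nth : computes 2 rnth (fun v => nth 0 (CodeSeq.decode (a1 v)) (a0 v)).
Proof.
apply: computes_ext; first by computable.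
by case=> [|j [|m []]] //= _; rewrite CodeSeq.codeK -nth0 nth_drop addn0.
Qed.
#[local] Hint Resolve computes_nth : computes.

Definition rcons := rcomp2 rmul (rcomp1 rpow2 (RProj 0))
  (rcomp1 RSucc (rcomp2 radd (RProj 1) (RProj 1))).
Lemma computes_cons :
  computes 2 rcons (fun v => CodeSeq.code (a0 v :: CodeSeq.decode (a1 v))).
Proof.
apply: computes_ext; first by computable.
by case=> [|a [|c []]] //= _; rewrite CodeSeq.decodeK addnn.
Qed.
#[local] Hint Resolve computes_cons : computes.

Section Map.
Variables (k : nat) (f l : recf) (F L : seq nat -> nat).
Hypotheses (HF : computes k.+1 f F) (HL : computes k l L).

(* Step [i] of the recursion conses the image of the [i]-th element from the
   end of the list. *)
Definition rmap_step := rcomp2 rcons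
  (RComp f (rcomp2 rnth (rcomp2 rsub (rcomp1 rsize (RComp l (rprojs 2 k)))
                                     (rcomp1 RSucc (RProj 0)))
                        (RComp l (rprojs 2 k)) :: rprojs 2 k))
  (RProj 1).
Definition rmap := RComp (RPrim RZero rmap_step) (rcomp1 rsize l :: rprojs 0 k).

Lemma computes_map : computes k rmap
  (fun v => CodeSeq.code [seq F (x :: v) | x <- CodeSeq.decode (L v)]).
Proof.
have HLs : computes k.+2 (RComp l (rprojs 2 k)) (fun w => L (drop 2 w)).
  exact: (computes_shift 2 HL).
pose Ls w := CodeSeq.decode (L (drop 2 w)).
pose step w := CodeSeq.code
  (F (nth 0 (Ls w) (size (Ls w) - (a0 w).+1) :: drop 2 w) :: CodeSeq.decode (a1 w)).
have Hstep : computes k.+2 rmap_step step.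
  have Hidx := computes_comp2 computes_sub (computes_comp1 computes_size HLs)
    (computes_comp1 computes_succ (computes_proj (k := k.+2) (i := 0) erefl)).
  have Hx := computes_cons_shift (j := 2) HF (computes_comp2 computes_nth Hidx HLs).
  have Hacc := computes_proj (k := k.+2) (i := 1) erefl.
  exact: computes_ext (computes_comp2 computes_cons Hx Hacc) _.
apply: computes_ext.
  exact: (computes_cons_shift (j := 0) (computes_prim (computes_zero k) Hstep)
                              (computes_comp1 computes_size HL)).
move=> v sv /=; rewrite drop0; set s := CodeSeq.decode (L v).
suff map_suffix i : i <= size s ->
    prim_rec (fun=> 0) step i v = CodeSeq.code [seq F (x :: v) | x <- drop (size s - i) s].
  by rewrite map_suffix // subnn drop0.
elim: i => [|i IH] lt_is /=; first by rewrite subn0 drop_size.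
rewrite IH ?(ltnW lt_is) // /step CodeSeq.codeK /Ls /= drop0 -/s.
rewrite [drop (size s - i) s](_ : _ = drop (size s - i.+1).+1 s); last by rewrite subnSK.
by rewrite [in RHS](drop_nth 0) //; lia.
Qed.

End Map.

Definition rif0 k a b c := RComp (RPrim b (RComp c (rprojs 2 k))) (a :: rprojs 0 k).
Lemma computes_if0 k a b c A B C : computes k a A -> computes k b B -> computes k c C ->
  computes k (rif0 k a b c) (fun v => if A v is 0 then B v else C v).
Proof.
move=> Ha Hb Hc; apply: computes_ext.
  exact: (computes_cons_shift (j := 0) (computes_prim Hb (computes_shift 2 Hc)) Ha).
by move=> v sv /=; rewrite drop0; case: (A v) => [|n] /=; rewrite ?drop0.
Qed.

(* In [EMap b l], the body [b] sees the current element of [l] as argument [0],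
   followed by the outer arguments. *)
Inductive expr :=
| EArg of nat
| EConst of nat
| ENth of expr & nat
| ECons of expr & expr
| EMap of expr & expr
| EIf0 of expr & expr & expr.

Fixpoint expr_eval (e : expr) (v : seq nat) : nat :=
  match e with
  | EArg i => nth 0 v i
  | EConst c => c
  | ENth e i => nth 0 (CodeSeq.decode (expr_eval e v)) i
  | ECons a b => CodeSeq.code (expr_eval a v :: CodeSeq.decode (expr_eval b v))
  | EMap b l => CodeSeq.code [seq expr_eval b (x :: v) | x <- CodeSeq.decode (expr_eval l v)]
  | EIf0 a b c => if expr_eval a v is 0 then expr_eval b v else expr_eval c v
  end.

Lemma eval_if0 a b c v : expr_eval (EIf0 a b c) v =
  if expr_eval a v is 0 then expr_eval b v else expr_eval c v.
Proof. by []. Qed.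

Fixpoint expr_compile (k : nat) (e : expr) : recf :=
  match e with
  | EArg i => if i < k then RProj i else RZero
  | EConst c => rconst c
  | ENth e i => rcomp2 rnth (rconst i) (expr_compile k e)
  | ECons a b => rcomp2 rcons (expr_compile k a) (expr_compile k b)
  | EMap b l => rmap k (expr_compile k.+1 b) (expr_compile k l)
  | EIf0 a b c => rif0 k (expr_compile k a) (expr_compile k b) (expr_compile k c)
  end.

Lemma computes_compile e k : computes k (expr_compile k e) (expr_eval e).
Proof.
elim: e k => [i|c|e IH i|a IHa b IHb|b IHb l IHl|a IHa b IHb c IHc] k /=.
- case: ifP => ik; first exact: computes_proj.
  apply: computes_ext (computes_zero k) _ => v sv.
  by rewrite nth_default // sv leqNgt ik.
- exact: computes_const.
- exact: computes_comp2 computes_nth (computes_const k i) (IH k).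
- exact: computes_comp2 computes_cons (IHa k) (IHb k).
- exact: computes_map.
- exact: computes_if0.
Qed.

Definition implements (A B : countType) (eT : expr -> expr) (T : A -> B) :=
  forall x v a, expr_eval x v = pickle a -> expr_eval (eT x) v = pickle (T a).

Lemma decidable_on_reduce (X Y : countType) (DomX PX : X -> Prop) (DomY PY : Y -> Prop)
    (eT : expr -> expr) (T : X -> Y) :
  implements eT T -> (forall x, DomX x -> DomY (T x) /\ (PX x <-> PY (T x))) ->
  decidable_on DomY PY -> decidable_on DomX PX.
Proof.
move=> HT HPT [f Hf]; exists (RComp f [:: expr_compile 1 (eT (EArg 0))]) => x Dx.
have HTx : reval (expr_compile 1 (eT (EArg 0))) [:: pickle x] (pickle (T x)).
  by rewrite -(HT (EArg 0) [:: pickle x] x erefl); apply: (computesP (computes_compile _ 1)).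
have args : revals [:: expr_compile 1 (eT (EArg 0))] [:: pickle x] [:: pickle (T x)].
  by constructor; [exact: HTx | constructor].
have [DTx PXT] := HPT x Dx; have [Hyes Hno] := Hf (T x) DTx.
by split=> Px; apply: ev_comp args _; [exact/Hyes/PXT | apply: Hno => /PXT].
Qed.

Arguments CodeSeq.code : simpl never.

Definition epair a b := ECons a (ECons b (EConst 0)).
Definition esome a := ECons a (EConst 0).
Definition einl a := epair (esome a) (EConst 0).
Definition einr a := epair (EConst 0) (esome a).

Section PickleRules.
Variable v : seq nat.
Implicit Types (A B : countType).

Lemma eval_fst A B e (y1 : A) (y2 : B) :
  expr_eval e v = pickle (y1, y2) -> expr_eval (ENth e 0) v = pickle y1.
Proof. by move=> /= ->; rewrite [pickle (_, _)]/= CodeSeq.codeK. Qed.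

Lemma eval_snd A B e (y1 : A) (y2 : B) :
  expr_eval e v = pickle (y1, y2) -> expr_eval (ENth e 1) v = pickle y2.
Proof. by move=> /= ->; rewrite [pickle (_, _)]/= CodeSeq.codeK. Qed.

Lemma eval_unsome A e (y : A) :
  expr_eval e v = pickle (Some y) -> expr_eval (ENth e 0) v = pickle y.
Proof. by move=> /= ->; rewrite [pickle (Some _)]/= CodeSeq.codeK. Qed.

Lemma eval_pair A B a b (y1 : A) (y2 : B) :
  expr_eval a v = pickle y1 -> expr_eval b v = pickle y2 ->
  expr_eval (epair a b) v = pickle (y1, y2).
Proof. by move=> /= -> ->; rewrite CodeSeq.codeK. Qed.

Lemma eval_cons A a b (y : A) s :
  expr_eval a v = pickle y -> expr_eval b v = pickle s ->
  expr_eval (ECons a b) v = pickle (y :: s).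
Proof. by move=> /= -> ->; rewrite [pickle s]/= CodeSeq.codeK. Qed.

Lemma eval_nil A : expr_eval (EConst 0) v = pickle ([::] : seq A).
Proof. by []. Qed.

Lemma eval_some A a (y : A) :
  expr_eval a v = pickle y -> expr_eval (esome a) v = pickle (Some y).
Proof. by move=> /= ->. Qed.

Lemma eval_none A : expr_eval (EConst 0) v = pickle (None : option A).
Proof. by []. Qed.

Lemma eval_inl A a (x : nat) :
  expr_eval a v = pickle x -> expr_eval (einl a) v = pickle (inl x : nat + A).
Proof.
move=> Ha; rewrite -[pickle (inl x)]/(pickle (Some x, None : option A)).
exact: eval_pair (eval_some Ha) (eval_none _).
Qed.

Lemma eval_inr A a (y : A) :
  expr_eval a v = pickle y -> expr_eval (einr a) v = pickle (inr y : nat + A).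
Proof.
move=> Ha; rewrite -[pickle (inr y)]/(pickle (None : option nat, Some y)).
exact: eval_pair (eval_none _) (eval_some Ha).
Qed.

Lemma eval_map A B b l (s : seq A) (f : A -> B) :
  expr_eval l v = pickle s -> (forall y, expr_eval b (pickle y :: v) = pickle (f y)) ->
  expr_eval (EMap b l) v = pickle (map f s).
Proof.
move=> /= -> Hb; rewrite [pickle s]/= CodeSeq.codeK -map_comp.
rewrite -[pickle (map f s)]/(CodeSeq.code (map pickle (map f s))) -map_comp.
by congr CodeSeq.code; apply: eq_map => y /=.
Qed.

End PickleRules.

Lemma eval_const (A : countType) (a : A) v : expr_eval (EConst (pickle a)) v = pickle a.
Proof. by []. Qed.

Lemma implements_id (A : countType) : implements id (@id A).
Proof. by []. Qed.

Lemma implements_pair (A B A' B' : countType) e1 e2 (T1 : A -> A') (T2 : B -> B') :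
  implements e1 T1 -> implements e2 T2 ->
  implements (fun x => epair (e1 (ENth x 0)) (e2 (ENth x 1))) (fun p => (T1 p.1, T2 p.2)).
Proof.
by move=> H1 H2 x v [a b] xab; apply: eval_pair (H1 _ _ _ (eval_fst xab)) (H2 _ _ _ (eval_snd xab)).
Qed.

Lemma implements_map (A B : countType) eT (T : A -> B) :
  implements eT T -> implements (EMap (eT (EArg 0))) (map T).
Proof. by move=> HT x v s xs; apply: eval_map xs _ => y; apply: HT. Qed.

(** * Conjugation in the semidirect product *)

Section SemidirectProduct.
Variables (G : Type) (mul : G -> G -> G) (one : G) (inv : G -> G).
Hypothesis HG : is_group mul one inv.
Variables (psi psiinv : G -> G).
Hypothesis Hpsi : is_aut mul psi psiinv.
Local Notation "x * y" := (mul x y).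
Local Notation ap := (autpow psi psiinv).

Let mulA x y z : x * (y * z) = (x * y) * z. Proof. by case: HG. Qed.
Let mul1g x : one * x = x. Proof. by case: HG. Qed.
Let mulg1 x : x * one = x. Proof. by case: HG. Qed.
Let mulVg x : inv x * x = one. Proof. by case: HG. Qed.
Let mulgV x : x * inv x = one. Proof. by case: HG. Qed.
Let mulKg x y : inv x * (x * y) = y. Proof. by rewrite mulA mulVg mul1g. Qed.
Let mulKVg x y : x * (inv x * y) = y. Proof. by rewrite mulA mulgV mul1g. Qed.
Let inv_uniq x y : x * y = one -> y = inv x.
Proof. by move=> xy1; rewrite -(mulKg x y) xy1 mulg1. Qed.
Let invK x : inv (inv x) = x.
Proof. by symmetry; apply: inv_uniq; rewrite mulVg. Qed.
Let invM x y : inv (x * y) = inv y * inv x.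
Proof. by symmetry; apply: inv_uniq; rewrite -mulA (mulA y) mulgV mul1g mulgV. Qed.
Let inv1 : inv one = one.
Proof. by symmetry; apply: inv_uniq; rewrite mul1g. Qed.

Let psiM x y : psi (x * y) = psi x * psi y. Proof. by case: Hpsi. Qed.
Let psiK : cancel psi psiinv. Proof. by case: Hpsi. Qed.
Let psiKV : cancel psiinv psi. Proof. by case: Hpsi. Qed.
Let psi1 : psi one = one.
Proof. by rewrite -[LHS](mulKg (psi one)) -psiM mulg1 mulVg. Qed.
Let psiV x : psi (inv x) = inv (psi x).
Proof. by apply: inv_uniq; rewrite -psiM mulgV psi1. Qed.
Let psiinvM x y : psiinv (x * y) = psiinv x * psiinv y.
Proof. by rewrite -{1}[x]psiKV -{1}[y]psiKV -psiM psiK. Qed.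
Let psiinvV x : psiinv (inv x) = inv (psiinv x).
Proof. by rewrite -{1}[x]psiKV -psiV psiK. Qed.

Let iterK m : cancel (iter m psi) (iter m psiinv).
Proof. by elim: m => // m IH x; rewrite iterSr iterS psiK IH. Qed.
Let iterKV m : cancel (iter m psiinv) (iter m psi).
Proof. by elim: m => // m IH x; rewrite iterSr iterS psiKV IH. Qed.

Let autpow_pos m y : ap (Posz m) y = iter m psi y. Proof. by []. Qed.
Let autpow_neg m y : ap (Negz m) y = iter m.+1 psiinv y. Proof. by []. Qed.

Lemma autpowNK k : cancel (ap (- k)%R) (ap k).
Proof. by case: k => [[|m]|m] //; [exact: iterKV | exact: iterK]. Qed.

Lemma autpowSNK k y : ap (1 + k)%R (ap (- k)%R y) = psi y.
Proof.
case: k => [[|m]|[|m]] //.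
- have -> : (1 + Posz m.+1 = Posz m.+2)%R by [].
  by rewrite -[(- _)%R]/(Negz m) autpow_pos autpow_neg iterS iterKV.
- have -> : (1 + Negz m.+1 = Negz m)%R by lia.
  by rewrite -[(- _)%R]/(Posz m.+2) autpow_pos autpow_neg (iterSr m.+1) iterK.
Qed.

Definition twconj u x := inv (psi u) * (x * u).

Lemma twconj1 x : twconj one x = x.
Proof. by rewrite /twconj psi1 inv1 mul1g mulg1. Qed.

Lemma twconjM g u x : twconj g (twconj u x) = twconj (u * g) x.
Proof. by rewrite /twconj psiM invM !mulA -!mulA. Qed.

Lemma psi_twconj u x : psi (twconj u x) = twconj (inv x * psi u) x.
Proof. by rewrite /twconj mulKVg !psiM !psiV invM invK -mulA. Qed.

Lemma psiinv_twconj u x : psiinv (twconj u x) = twconj (psiinv x * psiinv u) x.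
Proof. by rewrite /twconj !psiinvM psiinvV psiK psiM !psiKV invM -mulA mulKg. Qed.

Lemma autpow_twconj k x : exists u, ap k x = twconj u x.
Proof.
have iter_twconj f : (forall u, exists u', f (twconj u x) = twconj u' x) ->
    forall m, exists u, iter m f x = twconj u x.
  move=> f_tw; elim=> [|m [u IH]] /=; first by exists one; rewrite twconj1.
  by rewrite IH; apply: f_tw.
case: k => m; apply: iter_twconj => u; eexists.
  exact: psi_twconj.
exact: psiinv_twconj.
Qed.

Variables (n : nat) (gens : 'I_n -> G).

Local Notation smul := (sd_mul mul psi psiinv).
Local Notation sone := (sd_one one).
Local Notation sinv := (sd_inv inv psi psiinv).
Local Notation sletter := (sd_let one inv gens).
Local Notation wG := (wordG mul one inv gens).

Definition lift_letter (a : 'I_n * bool) : option 'I_n * bool := (Some a.1, a.2).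
Definition t_letter : option 'I_n * bool := (None, false).

Lemma sd_eval_lift w : weval smul sone sletter (map lift_letter w) = (0%R, wG w).
Proof. by elim: w => [|[i b] w IH] //=; rewrite IH. Qed.

Lemma sd_eval_t_lift w : weval smul sone sletter (t_letter :: map lift_letter w) = (1%R, wG w).
Proof. by rewrite /= sd_eval_lift /sd_mul /= mul1g. Qed.

Lemma sd_conj0 k g x :
  smul (sinv (k, g)) (smul (0%R, x) (k, g)) = (0%R, inv g * (ap k x * g)).
Proof.
rewrite /sd_mul /sd_inv /=.
have -> : (0 + k = k)%R by lia.
have -> : (- k + k = 0)%R by lia.
by rewrite autpowNK.
Qed.

Lemma sd_conj1 k g x :
  smul (sinv (k, g)) (smul (1%R, x) (k, g)) = (1%R, inv (psi g) * (ap k x * g)).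
Proof.
rewrite /sd_mul /sd_inv /= autpowSNK psiV.
by have -> : (- k + (1 + k) = 1)%R by lia.
Qed.

Variables (DG DS : Type) (langG : DG -> seq ('I_n * bool) -> Prop)
  (langS : DS -> seq (option 'I_n * bool) -> Prop).

Lemma sd_gcp_lift dG dS w :
  (forall w', langS dS w' <-> exists2 w0, w' = map lift_letter w0 & langG dG w0) ->
  sd_gcp_prop mul one inv gens langS psi psiinv (dS, map lift_letter w) <->
  brcp_prop mul one inv gens langG psi psiinv (dG, w).
Proof.
move=> HL; rewrite /sd_gcp_prop /gcp_prop /brcp_prop /in_subset /= sd_eval_lift; split.
  case=> [[k g]] [w'] [/HL [w0 -> Hw0]]; rewrite sd_conj0 sd_eval_lift => [[wE]].
  by exists k, g, w0.
case=> k [g] [w0 [Hw0 wE]]; exists (k, g), (map lift_letter w0); split.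
  by apply/HL; exists w0.
by rewrite sd_conj0 sd_eval_lift /wordG wE.
Qed.

Lemma sd_gcp_t_lift dG dS w :
  (forall w', langS dS w' <-> exists2 w0, w' = t_letter :: map lift_letter w0 & langG dG w0) ->
  sd_gcp_prop mul one inv gens langS psi psiinv (dS, t_letter :: map lift_letter w) <->
  tcp_prop mul one inv gens langG psi (dG, w).
Proof.
move=> HL; rewrite /sd_gcp_prop /gcp_prop /tcp_prop /in_subset sd_eval_t_lift; split.
  case=> [[k g]] [w'] [/HL [w0 -> Hw0]]; rewrite sd_conj1 sd_eval_t_lift => [[wE]].
  have [u apE] := autpow_twconj k (wG w).
  exists (u * g), w0; split => //; rewrite -[LHS]/(wG w0) wE apE.
  by rewrite -/(twconj g _) twconjM.
case=> g [w0 [Hw0 wE]]; exists (0%R, g), (t_letter :: map lift_letter w0); split.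
  by apply/HL; exists w0.
by rewrite sd_conj1 sd_eval_t_lift /wordG wE.
Qed.

End SemidirectProduct.

(** * Automata and grammars for the lifted subsets *)

Section PickleBounds.
Variables A B : countType.

Lemma code_mem_lt x s : x \in s -> x < CodeSeq.code s.
Proof. by move=> xs; have /allP := CodeSeq.ltn_code s; apply. Qed.

Lemma pickle_fst_lt (a : A) (b : B) : pickle a < pickle (a, b).
Proof. exact: (@code_mem_lt _ [:: pickle a; pickle b]) (mem_head _ _). Qed.

Lemma pickle_snd_lt (a : A) (b : B) : pickle b < pickle (a, b).
Proof. by apply: (@code_mem_lt _ [:: pickle a; pickle b]); rewrite !inE eqxx orbT. Qed.

Lemma pickle_some_lt (a : A) : pickle a < pickle (Some a).
Proof. exact: (@code_mem_lt _ [:: pickle a]) (mem_head _ _). Qed.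

Lemma pickle_mem_lt (a : A) (s : seq A) : a \in s -> pickle a < pickle s.
Proof. by move=> a_s; apply: (@code_mem_lt _ (map pickle s)); apply: map_f. Qed.

End PickleBounds.

Lemma nfa_runE (L : eqType) tr fin p (w : seq L) : nfa_run tr fin p w ->
  if w is a :: u then exists2 p', (p, a, p') \in tr & nfa_run tr fin p' u
  else is_true (p \in fin).
Proof. by case=> // q a q' u; exists q'. Qed.

Lemma nfa_run_cons_fresh (L : eqType) tr fin (t : nat * L * nat) p w :
  t.1.1 \notin [seq u.2 | u <- tr] -> p != t.1.1 ->
  nfa_run (t :: tr) fin p w <-> nfa_run tr fin p w.
Proof.
move=> t_fresh p_t; split; last first.
  elim=> [q qf|q a q' u tin _ IH]; first by constructor.
  by apply: run_cons IH; rewrite inE tin orbT.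
move=> run; elim: run p_t => [q qf|q a q' u + _ IH] q_t; first by constructor.
rewrite inE => /orP [/eqP tE|tin]; first by rewrite -tE eqxx in q_t.
apply: (run_cons tin); apply: IH.
by apply: contraNneq t_fresh => <-; apply/mapP; exists (q, a, q').
Qed.

Section NFA.
Variable n : nat.
Local Notation L := ('I_n * bool)%type.
Local Notation L' := (option 'I_n * bool)%type.

Definition lift_transition (t : nat * L * nat) : nat * L' * nat :=
  (t.1.1, lift_letter t.1.2, t.2).

Definition nfa_lift (M : nfa L) : nfa L' := ((M.1.1, map lift_transition M.1.2), M.2).

(* [pickle M] is a state not occurring in [M]. *)
Definition nfa_t_lift (M : nfa L) : nfa L' :=
  ((pickle M, (pickle M, t_letter n, M.1.1) :: map lift_transition M.1.2), M.2).

Lemma nfa_run_lift tr fin q w' : nfa_run (map lift_transition tr) fin q w' <->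
  exists2 w, w' = map (@lift_letter n) w & nfa_run tr fin q w.
Proof.
split.
  elim=> [p pf|p a p' u /mapP [[[p0 b] p1] tin [-> -> ->]] _ [w -> IH]].
    by exists [::] => //; constructor.
  by exists (b :: w) => //; apply: run_cons tin IH.
case=> w ->; elim=> [p pf|p a p' u tin _ IH] /=; first by constructor.
by econstructor; [apply/mapP; exists (p, a, p') | exact: IH].
Qed.

Lemma nfa_lang_lift M w' : nfa_lang (nfa_lift M) w' <->
  exists2 w, w' = map (@lift_letter n) w & nfa_lang M w.
Proof. exact: nfa_run_lift. Qed.

Lemma nfa_pickle_fresh (M : nfa L) :
  [/\ M.1.1 < pickle M, forall f, f \in M.2 -> f < pickle M &
      forall t, t \in M.1.2 -> t.1.1 < pickle M /\ t.2 < pickle M].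
Proof.
case: M => [[s tr] fin] /=.
have tr_lt : pickle tr < pickle (s, tr, fin).
  exact: ltn_trans (pickle_snd_lt s tr) (pickle_fst_lt _ fin).
split.
- exact: ltn_trans (pickle_fst_lt s tr) (pickle_fst_lt _ fin).
- by move=> f /(@pickle_mem_lt nat) f_lt; exact: ltn_trans f_lt (pickle_snd_lt _ fin).
move=> [[p a] q] /pickle_mem_lt t_lt /=; have {}t_lt := ltn_trans t_lt tr_lt; split.
  exact: ltn_trans (pickle_fst_lt p a) (ltn_trans (pickle_fst_lt _ q) t_lt).
exact: ltn_trans (pickle_snd_lt _ q) t_lt.
Qed.

Lemma nfa_lang_t_lift M w' : nfa_lang (nfa_t_lift M) w' <->
  exists2 w, w' = t_letter n :: map (@lift_letter n) w & nfa_lang M w.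
Proof.
have [start_lt final_lt trans_lt] := nfa_pickle_fresh M.
set q := pickle M; set t := (q, t_letter n, M.1.1).
have q_fresh : t.1.1 \notin [seq u.2 | u <- map lift_transition M.1.2].
  apply/mapP => -[_ /mapP [u uin ->] /= qE].
  by have [_] := trans_lt u uin; rewrite -qE ltnn.
have start_q : M.1.1 != t.1.1 by rewrite neq_ltn start_lt.
rewrite /nfa_lang /=; split; last first.
  case=> w -> Mw; econstructor; first exact: mem_head.
  by apply/(nfa_run_cons_fresh _ _ q_fresh start_q)/nfa_run_lift; exists w.
move/nfa_runE; case: w' => [/final_lt|a u [p']]; first by rewrite ltnn.
rewrite inE => /orP [/eqP [-> ->]|/mapP [u' u'in [qE _ _]]] run_u; last first.
  by have [] := trans_lt u' u'in; rewrite -qE ltnn.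
move/(nfa_run_cons_fresh _ _ q_fresh start_q)/nfa_run_lift: run_u => [w -> Mw].
by exists w.
Qed.

End NFA.

Scheme cfg_der_mut := Induction for cfg_der Sort Prop
with cfg_ders_mut := Induction for cfg_ders Sort Prop.

Section CFGDerivations.
Variables (L : eqType) (P : seq (nat * seq (nat + L))).

Lemma cfg_derE A w : cfg_der P A w -> exists2 rhs, (A, rhs) \in P & cfg_ders P rhs w.
Proof. by case=> A0 rhs w0; exists rhs. Qed.

Lemma cfg_dersE rhs w : cfg_ders P rhs w ->
  match rhs with
  | [::] => w = [::]
  | inr a :: r => exists2 w1, w = a :: w1 & cfg_ders P r w1
  | inl A :: r => exists u w1, [/\ w = u ++ w1, cfg_der P A u & cfg_ders P r w1]
  end.
Proof. by case=> // [a r w1 | A r u w1] *; [exists w1 | exists u, w1]. Qed.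

Lemma cfg_der_subset P' A w : {subset P <= P'} -> cfg_der P A w -> cfg_der P' A w.
Proof.
move=> sPP' der; apply: (@cfg_der_mut L P (fun A w _ => cfg_der P' A w)
  (fun rhs w _ => cfg_ders P' rhs w)) der => [A0 rhs w0 /sPP' rin _ IH| |a r w0 _ IH|].
- exact: der_prod rin IH.
- exact: ders_nil.
- exact: ders_term.
- by move=> *; apply: ders_nt.
Qed.

Lemma cfg_der_cons_fresh (p : nat * seq (nat + L)) A w :
  (forall r, r \in P -> inl p.1 \notin r.2) -> A != p.1 ->
  cfg_der (p :: P) A w <-> cfg_der P A w.
Proof.
move=> p_fresh A_p; split; last by apply: cfg_der_subset => r rin; rewrite inE rin orbT.
move=> der; apply: (@cfg_der_mut L (p :: P) (fun A w _ => A != p.1 -> cfg_der P A w)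
  (fun rhs w _ => inl p.1 \notin rhs -> cfg_ders P rhs w)) der A_p.
- move=> A0 rhs w0; rewrite inE => /orP [/eqP <- _ _|rin _ IH _]; first by rewrite /= eqxx.
  exact: der_prod rin (IH (p_fresh _ rin)).
- by move=> _; apply: ders_nil.
- by move=> a r w0 _ IH; rewrite inE /= => /IH; apply: ders_term.
- move=> A0 r u w0 _ IH1 _ IH2; rewrite inE negb_or eq_sym => /andP [A0_p r_p].
  by apply: ders_nt; [apply: IH1; move: A0_p; apply: contraNneq => -> | exact: IH2].
Qed.

End CFGDerivations.

Section CFG.
Variable n : nat.
Local Notation L := ('I_n * bool)%type.
Local Notation L' := (option 'I_n * bool)%type.

Definition lift_symbol (x : nat + L) : nat + L' :=
  match x with inl A => inl A | inr a => inr (lift_letter a) end.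

Definition lift_production (p : nat * seq (nat + L)) : nat * seq (nat + L') :=
  (p.1, map lift_symbol p.2).

Definition cfg_lift (g : cfg L) : cfg L' := (g.1, map lift_production g.2).

(* [pickle g] is a nonterminal not occurring in [g]. *)
Definition cfg_t_lift (g : cfg L) : cfg L' :=
  (pickle g, (pickle g, [:: inr (t_letter n); inl g.1]) :: map lift_production g.2).

Lemma cfg_der_lift P A w :
  cfg_der P A w -> cfg_der (map lift_production P) A (map (@lift_letter n) w).
Proof.
move=> der; apply: (@cfg_der_mut L P
  (fun A w _ => cfg_der (map lift_production P) A (map (@lift_letter n) w))
  (fun rhs w _ => cfg_ders (map lift_production P) (map lift_symbol rhs)
                           (map (@lift_letter n) w))) der.
- move=> A0 rhs w0 rin _ IH; apply: der_prod IH.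
  by apply/mapP; exists (A0, rhs).
- exact: ders_nil.
- by move=> a r w0 _ IH; apply: ders_term.
- by move=> A0 r u w0 _ IH1 _ IH2; rewrite map_cat; apply: ders_nt.
Qed.

Lemma cfg_der_unlift P A w' : cfg_der (map lift_production P) A w' ->
  exists2 w, w' = map (@lift_letter n) w & cfg_der P A w.
Proof.
move=> der; apply: (@cfg_der_mut L' (map lift_production P)
  (fun A w' _ => exists2 w, w' = map (@lift_letter n) w & cfg_der P A w)
  (fun rhs' w' _ => forall rhs, rhs' = map lift_symbol rhs ->
     exists2 w, w' = map (@lift_letter n) w & cfg_ders P rhs w)) der.
- move=> A0 rhs' w0 /mapP [[A1 rhs] rin [-> ->]] _ IH.
  by have [w -> ders_w] := IH rhs erefl; exists w => //; apply: der_prod ders_w.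
- by case=> // _; exists [::] => //; apply: ders_nil.
- move=> a r w0 _ IH [//|[B|b] r'] //= [-> /IH [w -> ders_w]].
  by exists (b :: w) => //; apply: ders_term.
- move=> A0 r u w0 _ [u1 -> der_u] _ IH2 [//|[B|b] r'] //= [<- /IH2 [w1 -> ders_w]].
  by exists (u1 ++ w1); [rewrite map_cat | apply: ders_nt].
Qed.

Lemma cfg_lang_lift g w' : cfg_lang (cfg_lift g) w' <->
  exists2 w, w' = map (@lift_letter n) w & cfg_lang g w.
Proof. by split; [exact: cfg_der_unlift | case=> w -> /cfg_der_lift]. Qed.

Lemma cfg_pickle_fresh (g : cfg L) : g.1 < pickle g /\
  forall p, p \in g.2 -> p.1 < pickle g /\ forall B, inl B \in p.2 -> B < pickle g.
Proof.
case: g => S P /=; split; first exact: pickle_fst_lt.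
move=> [A rhs] /pickle_mem_lt p_lt /=; have {}p_lt := ltn_trans p_lt (pickle_snd_lt S P).
split; first exact: ltn_trans (pickle_fst_lt A rhs) p_lt.
move=> B /pickle_mem_lt B_lt; apply: ltn_trans (ltn_trans (pickle_snd_lt A rhs) p_lt).
apply: ltn_trans B_lt; rewrite -[pickle (inl B)]/(pickle (Some B, None : option L)).
exact: ltn_trans (pickle_some_lt B) (pickle_fst_lt _ _).
Qed.

Lemma cfg_lang_t_lift g w' : cfg_lang (cfg_t_lift g) w' <->
  exists2 w, w' = t_letter n :: map (@lift_letter n) w & cfg_lang g w.
Proof.
have [start_lt prod_lt] := cfg_pickle_fresh g.
set q := pickle g; set p := (q, [:: inr (t_letter n); inl g.1]).
set P := map lift_production g.2.
have q_fresh r : r \in P -> inl p.1 \notin r.2.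
  case/mapP=> [[A rhs] rin ->]; apply/mapP => -[[B|//] Bin [qB]].
  by have [_ /(_ B Bin)] := prod_lt _ rin; rewrite -qB ltnn.
have start_q : g.1 != p.1 by rewrite neq_ltn start_lt.
have der_start u : cfg_der (p :: P) g.1 u <-> cfg_der P g.1 u.
  exact: cfg_der_cons_fresh q_fresh start_q.
rewrite /cfg_lang /=; split; last first.
  case=> w -> gw; apply: der_prod (mem_head _ _) _; apply: ders_term.
  rewrite -[map _ w]cats0; apply: ders_nt (ders_nil _ ).
  exact/der_start/cfg_der_lift.
case/cfg_derE=> rhs; rewrite inE => /orP [/eqP [->]|/mapP [[A r] rin [qA _]]]; last first.
  by have [] := prod_lt _ rin; rewrite /= -qA ltnn.
case/cfg_dersE=> _ -> /cfg_dersE [u [w1 [-> /der_start/cfg_der_unlift [w -> gw]]]].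
by move/cfg_dersE => ->; exists w; rewrite ?cats0.
Qed.

End CFG.

(** * Computability of the lifts *)

Section LiftExpressions.
Variable n : nat.
Local Notation L := ('I_n * bool)%type.

Definition elift_letter e := epair (esome (ENth e 0)) (ENth e 1).
Lemma implements_lift_letter : implements elift_letter (@lift_letter n).
Proof. by move=> x v [i b] xa; apply: eval_pair (eval_some (eval_fst xa)) (eval_snd xa). Qed.

Definition elift_word := EMap (elift_letter (EArg 0)).
Lemma implements_lift_word : implements elift_word (map (@lift_letter n)).
Proof. exact/implements_map/implements_lift_letter. Qed.

Definition et_lift_word x := ECons (EConst (pickle (t_letter n))) (elift_word x).
Lemma implements_t_lift_word :
  implements et_lift_word (fun w => t_letter n :: map (@lift_letter n) w).
Proof. by move=> x v w xw; apply: eval_cons (eval_const _ _) (implements_lift_word xw). Qed.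

Definition elift_transition e :=
  epair (epair (ENth (ENth e 0) 0) (elift_letter (ENth (ENth e 0) 1))) (ENth e 1).
Lemma implements_lift_transition : implements elift_transition (@lift_transition n).
Proof.
move=> x v [[p a] q] xt; have xpa := eval_fst xt.
apply: eval_pair (eval_snd xt).
exact: eval_pair (eval_fst xpa) (implements_lift_letter (eval_snd xpa)).
Qed.

Definition enfa_lift d := epair
  (epair (ENth (ENth d 0) 0) (EMap (elift_transition (EArg 0)) (ENth (ENth d 0) 1)))
  (ENth d 1).
Lemma implements_nfa_lift : implements enfa_lift (@nfa_lift n).
Proof.
move=> x v [[s tr] fin] xM; have xstr := eval_fst xM.
apply: eval_pair (eval_snd xM); apply: eval_pair (eval_fst xstr) _.
exact: implements_map implements_lift_transition _ _ _ (eval_snd xstr).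
Qed.

Definition enfa_t_lift d := epair
  (epair d (ECons (epair (epair d (EConst (pickle (t_letter n)))) (ENth (ENth d 0) 0))
                  (EMap (elift_transition (EArg 0)) (ENth (ENth d 0) 1))))
  (ENth d 1).
Lemma implements_nfa_t_lift : implements enfa_t_lift (@nfa_t_lift n).
Proof.
move=> x v [[s tr] fin] xM; have xstr := eval_fst xM.
apply: (eval_pair _ (eval_snd xM)); apply: (eval_pair xM).
apply: eval_cons; first exact: eval_pair (eval_pair xM (eval_const _ _)) (eval_fst xstr).
exact: implements_map implements_lift_transition _ _ _ (eval_snd xstr).
Qed.

(* [pickle (inl A)] and [pickle (inr a)] are the codes of the pairs
   [(Some A, None)] and [(None, Some a)]. *)
Definition elift_symbol e :=
  EIf0 (ENth e 0) (einr (elift_letter (ENth (ENth e 1) 0))) e.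
Lemma implements_lift_symbol : implements elift_symbol (@lift_symbol n).
Proof.
move=> x v [A|a] xs.
  have x0 : expr_eval (ENth x 0) v = pickle (Some A).
    by apply: (eval_fst (y2 := None : option L)); rewrite xs.
  rewrite /elift_symbol eval_if0 x0.
  by case: (pickle (Some A)) (pickle_some_lt A).
have x0 : expr_eval (ENth x 0) v = pickle (None : option nat).
  by apply: (eval_fst (y2 := Some a)); rewrite xs.
have x1 : expr_eval (ENth x 1) v = pickle (Some a).
  by apply: (eval_snd (y1 := None : option nat)); rewrite xs.
rewrite /elift_symbol eval_if0 x0.
exact/eval_inr/implements_lift_letter/eval_unsome.
Qed.

Definition elift_production e := epair (ENth e 0) (EMap (elift_symbol (EArg 0)) (ENth e 1)).
Lemma implements_lift_production : implements elift_production (@lift_production n).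
Proof.
move=> x v [A rhs] xp; apply: (eval_pair (eval_fst xp)).
exact: implements_map implements_lift_symbol _ _ _ (eval_snd xp).
Qed.

Definition ecfg_lift g := epair (ENth g 0) (EMap (elift_production (EArg 0)) (ENth g 1)).
Lemma implements_cfg_lift : implements ecfg_lift (@cfg_lift n).
Proof.
move=> x v [S P] xg; apply: (eval_pair (eval_fst xg)).
exact: implements_map implements_lift_production _ _ _ (eval_snd xg).
Qed.

Definition ecfg_t_lift g := epair g
  (ECons (epair g (ECons (einr (EConst (pickle (t_letter n))))
                         (ECons (einl (ENth g 0)) (EConst 0))))
         (EMap (elift_production (EArg 0)) (ENth g 1))).
Lemma implements_cfg_t_lift : implements ecfg_t_lift (@cfg_t_lift n).
Proof.
move=> x v [S P] xg; apply: (eval_pair xg); apply: eval_cons.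
  apply: (eval_pair xg); apply: eval_cons (eval_inr (eval_const (t_letter n) v)) _.
  by apply: eval_cons; [apply: eval_inl; exact: eval_fst xg | exact: eval_nil].
exact: implements_map implements_lift_production _ _ _ (eval_snd xg).
Qed.

End LiftExpressions.

Lemma cor_3_10_for_of_lifts (G : Type) (mul : G -> G -> G) (one : G) (inv : G -> G)
    (HG : is_group mul one inv) (n : nat) (gens : 'I_n -> G) (phi phiinv : G -> G)
    (Hphi : is_aut mul phi phiinv) (DG DS : countType)
    (langG : DG -> seq ('I_n * bool) -> Prop)
    (langS : DS -> seq (option 'I_n * bool) -> Prop)
    (lift t_lift : DG -> DS) (elift et_lift : expr -> expr) :
  implements elift lift -> implements et_lift t_lift ->
  (forall d w', langS (lift d) w' <->
     exists2 w, w' = map (@lift_letter n) w & langG d w) ->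
  (forall d w', langS (t_lift d) w' <->
     exists2 w, w' = t_letter n :: map (@lift_letter n) w & langG d w) ->
  cor_3_10_for mul one inv gens phi phiinv langG langS.
Proof.
move=> Hlift Ht_lift lang_lift lang_t_lift.
have brcpE psi psiinv d w : is_aut mul psi psiinv ->
    brcp_prop mul one inv gens langG psi psiinv (d, w) <->
    sd_gcp_prop mul one inv gens langS psi psiinv (lift d, map (@lift_letter n) w).
  by move=> Hpsi; apply: iff_sym (sd_gcp_lift one inv Hpsi gens w (lang_lift d)).
have tcpE psi psiinv d w : is_aut mul psi psiinv ->
    tcp_prop mul one inv gens langG psi (d, w) <->
    sd_gcp_prop mul one inv gens langS psi psiinv (t_lift d, t_letter n :: map (@lift_letter n) w).
  by move=> Hpsi; apply: iff_sym (sd_gcp_t_lift HG Hpsi gens w (lang_t_lift d)).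
have red_brcp := implements_pair Hlift (@implements_lift_word n).
have red_tcp := implements_pair Ht_lift (@implements_t_lift_word n).
split=> dec; split.
- apply: (decidable_on_reduce red_brcp _ dec) => -[d w] _.
  by split; last exact: brcpE.
- apply: (decidable_on_reduce red_tcp _ dec) => -[d w] _.
  by split; last exact: tcpE.
- apply: decidable_on_reduce (implements_pair (@implements_id _) red_brcp) _ dec.
  move=> [psiw [d w]] valid; split=> //; split=> -[psi [psiinv [rep_psi prop]]];
    by exists psi, psiinv; split; last apply/(brcpE _ _ _ _ rep_psi.1).
- apply: decidable_on_reduce (implements_pair (@implements_id _) red_tcp) _ dec.
  move=> [psiw [d w]] valid; split=> //; split=> -[psi [psiinv [rep_psi prop]]];
    by exists psi, psiinv; split; last apply/(tcpE _ _ _ _ rep_psi.1).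
Qed.

Theorem corollary3p10
  (G : Type) (mul : G -> G -> G) (one : G) (inv : G -> G)
  (HG : is_group mul one inv)
  (n : nat) (gens : 'I_n -> G)
  (Hgen : forall g : G, exists w, wordG mul one inv gens w = g)
  (phi phiinv : G -> G) (Hphi : is_aut mul phi phiinv) :
  (* (i) and (ii): rational subsets *)
  cor_3_10_for mul one inv gens phi phiinv
    (@nfa_lang ('I_n * bool)%type) (@nfa_lang (option 'I_n * bool)%type)
  /\
  (* (iii) and (iv): algebraic subsets *)
  cor_3_10_for mul one inv gens phi phiinv
    (@cfg_lang ('I_n * bool)%type) (@cfg_lang (option 'I_n * bool)%type).
Proof.
split.
  exact: (cor_3_10_for_of_lifts (langG := @nfa_lang _) (langS := @nfa_lang _) HG gens Hphi
    (@implements_nfa_lift n) (@implements_nfa_t_lift n) (@nfa_lang_lift n) (@nfa_lang_t_lift n)).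
exact: (cor_3_10_for_of_lifts (langG := @cfg_lang _) (langS := @cfg_lang _) HG gens Hphi
  (@implements_cfg_lift n) (@implements_cfg_t_lift n) (@cfg_lang_lift n) (@cfg_lang_t_lift n)).
Qed.
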